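(* Let $M,N_c,N_g$ be positive integers with $N_g\le N_c$, let $T_s>0$, and let $S_k^{AD}:[-\pi/2,\pi/2]\times\{0,T_s,\dots,(N_g-1)T_s\}\to[0,\infty)$ be bounded and, for each delay, Riemann integrable in $\theta$. Define the space-frequency channel covariance matrix $$\mathbf{R}_k=\sum_{q=0}^{N_g-1}\int_{-\pi/2}^{\pi/2}\left[\mathbf{f}_{N_c,q}\otimes\mathbf{v}_{M,\theta}\right]\left[\mathbf{f}_{N_c,q}\otimes\mathbf{v}_{M,\theta}\right]^{H} S_k^{AD}(\theta,qT_s)\,d\theta\in\mathbb{C}^{MN_c\times MN_c}.$$ Define $\mathbf{V}_M\in\mathbb{C}^{M\times M}$ by $[\mathbf{V}_M]_{i,j}=\frac{1}{\sqrt{M}}\exp\!\left(-\jmath 2\pi\frac{i(j-M/2)}{M}\right)$ and $\boldsymbol{\Omega}_k\in\mathbb{R}^{M\times N_g}$ by $$[\boldsymbol{\Omega}_k]_{i,j}=MN_c(\theta_{i+1}-\theta_i)\,S_k^{AD}(\theta_i,\tau_j),\qquad \theta_m=\arcsin(2m/M-1),\ \tau_n=nT_s.$$ Then, for fixed non-negative integers $i$ and $j$, $$\lim_{M\to\infty}\Big[\mathbf{R}_k-\left(\mathbf{F}_{N_c\times N_g}\otimes\mathbf{V}_M\right)\mathrm{diag}\{\mathrm{vec}(\boldsymbol{\Omega}_k)\}\left(\mathbf{F}_{N_c\times N_g}\otimes\mathbf{V}_M\right)^{H}\Big]_{i,j}=0,$$ i.e. as $M\to\infty$, $\mathbf{R}_k$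 tends entrywise to $\left(\mathbf{F}_{N_c\times N_g}\otimes\mathbf{V}_M\right)\mathrm{diag}\{\mathrm{vec}(\boldsymbol{\Omega}_k)\}\left(\mathbf{F}_{N_c\times N_g}\otimes\mathbf{V}_M\right)^{H}$.
   Context: $\jmath=\sqrt{-1}$. Matrix/vector element indices start at $0$. $\mathbf{F}_N$ is the $N\times N$ unitary DFT matrix, $[\mathbf{F}_N]_{i,j}=\frac{1}{\sqrt N}e^{-\jmath 2\pi ij/N}$; $\mathbf{F}_{N\times G}$ is the matrix of the first $G$ columns of $\mathbf{F}_N$; $\mathbf{f}_{N,q}$ is the $q$th column of $\sqrt{N}\mathbf{F}_N$. The array response vector is $\mathbf{v}_{M,\theta}=[1,\ e^{-\jmath\pi\sin\theta},\ \dots,\ e^{-\jmath\pi(M-1)\sin\theta}]^T\in\mathbb{C}^{M}$. $\otimes$ is the Kronecker product, $\mathrm{vec}(\cdot)$ stacks columns, $\mathrm{diag}\{\mathbf{x}\}$ is the diagonal matrix with $\mathbf{x}$ on its diagonal. $S_k^{AD}(\theta,\tau)$ is the power angle-delay spectrum of user $k$. *)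

From Stdlib Require Import Reals.
From Coquelicot Require Import Coquelicot.
Open Scope R_scope.

Definition cexpi (x : R) : C := (cos x, sin x).

(* Matrices are represented as functions of (0-based) nat indices. *)

Definition arr_resp (M : nat) (theta : R) (m : nat) : C :=
  cexpi (- PI * INR m * sin theta).

(* f_{N,q}: q-th column of sqrt(N) F_N, entry n *)
Definition fcol (N q n : nat) : C := cexpi (- 2 * PI * INR n * INR q / INR N).

Definition kron_vec (M : nat) (x y : nat -> C) (a : nat) : C :=
  Cmult (x (a / M)%nat) (y (a mod M)%nat).

Definition Rk (M Nc Ng : nat) (Ts : R) (S : R -> R -> R) (a b : nat) : C :=
  sum_n (fun q =>
    RInt (V := C_R_CompleteNormedModule)
      (fun theta =>
         Cmult (Cmult (kron_vec M (fcol Nc q) (arr_resp M theta) a)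
                      (Cconj (kron_vec M (fcol Nc q) (arr_resp M theta) b)))
               (RtoC (S theta (INR q * Ts))))
      (- (PI / 2)) (PI / 2)) (Ng - 1).

Definition VM (M i j : nat) : C :=
  Cmult (RtoC (/ sqrt (INR M)))
        (cexpi (- 2 * PI * INR i * (INR j - INR M / 2) / INR M)).

(* F_{Nc x Ng}: first Ng columns of the unitary DFT matrix F_Nc *)
Definition Fsub (Nc n q : nat) : C :=
  Cmult (RtoC (/ sqrt (INR Nc))) (cexpi (- 2 * PI * INR n * INR q / INR Nc)).

Definition kron_mx (p r : nat) (A B : nat -> nat -> C) (a c : nat) : C :=
  Cmult (A (a / p)%nat (c / r)%nat) (B (a mod p)%nat (c mod r)%nat).

Definition theta_grid (M m : nat) : R := asin (2 * INR m / INR M - 1).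

Definition Omega (M Nc : nat) (Ts : R) (S : R -> R -> R) (i j : nat) : R :=
  INR M * INR Nc * (theta_grid M (Nat.succ i) - theta_grid M i)
  * S (theta_grid M i) (INR j * Ts).

Definition vec_mx (M : nat) (Om : nat -> nat -> R) (c : nat) : R :=
  Om (c mod M)%nat (c / M)%nat.

Definition Rk_approx (M Nc Ng : nat) (Ts : R) (S : R -> R -> R) (a b : nat) : C :=
  let A := kron_mx M M (Fsub Nc) (VM M) in
  sum_n (fun c =>
    Cmult (Cmult (A a c) (RtoC (vec_mx M (Omega M Nc Ts S) c)))
          (Cconj (A b c))) (M * Ng - 1).

(* For fixed indices i, j and M > i, j only the first block of the Kronecker
   products is involved, so [R_k]_{i,j} is the M-independent integral
   sum_q int e^{-j pi (i - j) sin theta} S(theta, q Ts) d theta, while, since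
   sin theta_m = 2 m / M - 1, the phases of V_M turn the corresponding entry of
   the approximation into the left-endpoint Riemann sum of the same integrand on
   the arcsine grid theta_0 < ... < theta_M.  The mesh of that grid tends to 0
   because sin x - sin y >= 1 - cos (x - y) on [-pi/2, pi/2], so the Riemann
   sums converge to the integral.  The integrand is integrable as a continuous
   function times an integrable one: it is a uniform limit of the products of
   the integrable factor with step functions. *)

From Stdlib Require Import Reals Lra Lia.
From Coquelicot Require Import Coquelicot.
Open Scope R_scope.

Lemma eventually_div_INR_lt (c : R) (eps : posreal) :
  eventually (fun n : nat => c / INR n < eps).
Proof.
  assert (H := is_lim_seq_scal_l _ c _
                 (is_lim_seq_inv _ _ is_lim_seq_INR ltac:(discriminate))).
  simpl in H. rewrite Rmult_0_r in H. apply is_lim_seq_spec in H.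
  generalize (H eps); apply filter_imp; intros n Hn.
  rewrite Rminus_0_r in Hn. exact (Rle_lt_trans _ _ _ (Rle_abs _) Hn).
Qed.

Lemma filterlim_sum_n {T : Type} {F : (T -> Prop) -> Prop} {FF : Filter F}
    {V : NormedModule R_AbsRing} (u : nat -> T -> V) (l : nat -> V) N :
  (forall q, (q <= N)%nat -> filterlim (u q) F (locally (l q))) ->
  filterlim (fun x => sum_n (fun q => u q x) N) F (locally (sum_n l N)).
Proof.
  induction N as [|N IH]; intros Hu.
  - rewrite sum_O. apply (filterlim_ext (u 0%nat)); [intros; now rewrite sum_O|].
    apply Hu; lia.
  - rewrite sum_Sn.
    apply (filterlim_ext (fun x => plus (sum_n (fun q => u q x) N) (u (S N) x)));
      [intros; now rewrite sum_Sn|].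
    apply (filterlim_comp_2 (F := F) _ _ plus (IH (fun q Hq => Hu q ltac:(lia)))
             (Hu (S N) (le_n _))).
    apply filterlim_plus.
Qed.

Lemma sum_n_m_shift {G : AbelianMonoid} (a : nat -> G) k n :
  sum_n_m a k (k + n) = sum_n (fun m => a (k + m)%nat) n.
Proof.
  induction n as [|n IH].
  - now rewrite Nat.add_0_r, sum_n_n, sum_O, Nat.add_0_r.
  - rewrite Nat.add_succ_r, sum_n_Sm by lia. now rewrite IH, sum_Sn, Nat.add_succ_r.
Qed.

Lemma sum_n_mod_div {G : AbelianMonoid} (F : nat -> nat -> G) M N :
  (0 < M)%nat -> (0 < N)%nat ->
  sum_n (fun c => F (c mod M) (c / M))%nat (M * N - 1)
  = sum_n (fun q => sum_n (fun m => F m q) (M - 1)) (N - 1).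
Proof.
  intros HM HN. destruct N as [|n]; [lia|]. clear HN.
  induction n as [|n IH].
  - rewrite Nat.mul_1_r, sum_O. apply sum_n_ext_loc.
    intros c Hc. now rewrite Nat.mod_small, Nat.div_small by lia.
  - replace (S (S n) - 1)%nat with (S n) by lia. rewrite sum_Sn.
    replace (S n - 1)%nat with n in IH by lia. rewrite <- IH.
    unfold sum_n at 1. rewrite (sum_n_m_Chasles _ 0 (M * S n - 1) (M * S (S n) - 1)) by nia.
    f_equal.
    replace (S (M * S n - 1)) with (M * S n)%nat by nia.
    replace (M * S (S n) - 1)%nat with (M * S n + (M - 1))%nat by nia.
    rewrite sum_n_m_shift. apply sum_n_ext_loc. intros m Hm.
    replace (M * S n + m)%nat with (m + S n * M)%nat by lia.
    now rewrite Nat.div_add, Nat.Div0.mod_add, Nat.mod_small, Nat.div_small by lia.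
Qed.

Section LeftRiemannSums.

Variable x : nat -> R.

Definition left_tagged (k n : nat) : @SF_seq R :=
  SF_seq_f2 (fun u _ => u) (seq.map x (seq.iota k (S n))).

Lemma last_map_iota (d : R) k n :
  seq.last d (seq.map x (seq.iota k (S n))) = x (k + n)%nat.
Proof.
  revert k d; induction n as [|n IH]; intros k d.
  - simpl; f_equal; lia.
  - change (seq.last (x k) (seq.map x (seq.iota (S k) (S n))) = x (k + S n)%nat).
    rewrite IH; f_equal; lia.
Qed.

Lemma sorted_map_iota k n :
  (forall m, (k <= m < k + n)%nat -> x m <= x (S m)) ->
  sorted Rle (seq.map x (seq.iota k (S n))).
Proof.
  revert k; induction n as [|n IH]; intros k Hx; [exact I|].
  split; [apply Hx; lia|]. apply (IH (S k)); intros; apply Hx; lia.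
Qed.

Lemma seq_step_map_iota k n B : 0 <= B ->
  (forall m, (k <= m < k + n)%nat -> Rabs (x (S m) - x m) <= B) ->
  seq_step (seq.map x (seq.iota k (S n))) <= B.
Proof.
  intros HB; revert k; induction n as [|n IH]; intros k Hx.
  - unfold seq_step; simpl; lra.
  - apply Rmax_lub; [apply Hx; lia|]. apply (IH (S k)); intros; apply Hx; lia.
Qed.

Lemma Riemann_sum_left_tagged {V : ModuleSpace R_Ring} (h : R -> V) k n :
  Riemann_sum h (left_tagged k (S n))
  = sum_n_m (fun m => scal (x (S m) - x m) (h (x m))) k (k + n).
Proof.
  revert k; induction n as [|n IH]; intros k.
  - rewrite Nat.add_0_r, sum_n_n. unfold left_tagged; simpl.
    rewrite SF_cons_f2, Riemann_sum_cons by (simpl; lia).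
    simpl. apply plus_zero_r.
  - change (left_tagged k (S (S n))) with
      (SF_seq_f2 (fun u _ => u) (x k :: seq.map x (seq.iota (S k) (S (S n))))).
    rewrite SF_cons_f2, Riemann_sum_cons by (simpl; lia).
    change (SF_seq_f2 _ (seq.map x (seq.iota (S k) (S (S n)))))
      with (left_tagged (S k) (S n)).
    rewrite (IH (S k)), (sum_Sn_m _ k) by lia.
    simpl. do 2 f_equal; lia.
Qed.

End LeftRiemannSums.

Lemma is_lim_left_Riemann_sum {V : NormedModule R_AbsRing} (h : R -> V) a b l
    (x : nat -> nat -> R) :
  a < b -> is_RInt h a b l ->
  (forall n, x n O = a) -> (forall n, (0 < n)%nat -> x n n = b) ->
  (forall n m, (m < n)%nat -> x n m <= x n (S m)) ->
  (forall eps : posreal, eventually (fun n =>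
     forall m, (m < n)%nat -> Rabs (x n (S m) - x n m) <= eps)) ->
  filterlim (fun n => sum_n (fun m => scal (x n (S m) - x n m) (h (x n m))) (n - 1))
    eventually (locally l).
Proof.
  intros Hab HI Ha Hb Hmono Hmesh.
  assert (Hfine : filterlim (fun n => left_tagged (x n) 0 n) eventually (Riemann_fine a b)).
  { intros P [d Hd]; unfold filtermap.
    assert (Hpos : eventually (fun n => (0 < n)%nat)) by (exists 1%nat; intros; lia).
    generalize (filter_and _ _ Hpos (Hmesh (pos_div_2 d))). apply filter_imp.
    intros n [Hn Hstep]. unfold left_tagged. apply Hd.
    - rewrite SF_lx_f2 by (rewrite seq.size_map, seq.size_iota; apply Nat.lt_0_succ).
      apply Rle_lt_trans with (d / 2); [apply seq_step_map_iota|].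
      + destruct d; simpl; lra.
      + intros m Hm; apply Hstep; lia.
      + destruct d; simpl; lra.
    - rewrite Rmin_left, Rmax_right by lra. split; [|split].
      + apply ptd_f2; [|intros; lra].
        apply sorted_map_iota; intros; apply Hmono; lia.
      + apply Ha.
      + rewrite SF_lx_f2 by (rewrite seq.size_map, seq.size_iota; apply Nat.lt_0_succ).
        rewrite last_map_iota. now apply Hb. }
  generalize (filterlim_comp _ _ _ _ _ _ _ _ Hfine HI).
  apply filterlim_ext_loc. exists 1%nat; intros n Hn.
  destruct n as [|n]; [lia|]. simpl.
  rewrite sign_eq_1 by lra. rewrite (scal_one (K := R_Ring)).
  rewrite Riemann_sum_left_tagged, Nat.sub_0_r. reflexivity.
Qed.

Lemma ex_RInt_uniform_limit (g : R -> R) (h : nat -> R -> R) a b :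
  a <= b -> (forall n, ex_RInt (h n) a b) ->
  (forall eps : posreal, eventually (fun n =>
     forall t, a <= t <= b -> Rabs (h n t - g t) < eps)) ->
  ex_RInt g a b.
Proof.
  intros Hab Hh Hcv.
  (* [filterlim_RInt] wants uniform convergence on all of R: clamp to [a, b]. *)
  set (c t := Rmax a (Rmin b t)).
  assert (Hc : forall t, a <= c t <= b).
  { intros t; unfold c; split; [apply Rmax_l|apply Rmax_lub; [lra|apply Rmin_l]]. }
  assert (Ec : forall t, Rmin a b < t < Rmax a b -> c t = t).
  { rewrite Rmin_left, Rmax_right by lra. intros t Ht; unfold c.
    rewrite Rmin_right, Rmax_right by lra; reflexivity. }
  assert (Hunif : filterlim (fun n t => h n (c t)) eventually (locally (fun t => g (c t)))).
  { apply filterlim_locally; intros eps. generalize (Hcv eps); apply filter_imp.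
    intros n Hn t. apply Hn, Hc. }
  destruct (filterlim_RInt (fun n t => h n (c t)) a b eventually eventually_filter
              (fun t => g (c t)) (fun n => RInt (fun t => h n (c t)) a b)) as [I [_ HI]].
  - intros n. apply RInt_correct, (ex_RInt_ext (h n)), Hh.
    intros t Ht; now rewrite Ec.
  - exact Hunif.
  - exists I. apply (is_RInt_ext (fun t => g (c t))); [|exact HI].
    intros t Ht; now rewrite Ec.
Qed.

Definition grid_floor (a w t : R) : R := a + w * IZR (Int_part ((t - a) / w)).

Lemma grid_floor_bounds a w t : 0 < w -> a <= t ->
  a <= grid_floor a w t <= t /\ t < grid_floor a w t + w.
Proof.
  intros Hw Ht. unfold grid_floor. set (z := (t - a) / w).
  assert (Hz : 0 <= z) by (unfold z; apply Rdiv_le_0_compat; lra).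
  destruct (base_Int_part z) as [Hlow Hup].
  assert (Hnonneg : 0 <= IZR (Int_part z)).
  { apply IZR_le, Z.lt_succ_r, lt_IZR. rewrite succ_IZR. lra. }
  assert (Et : t = a + w * z) by (unfold z; field; lra).
  rewrite Et. repeat split; nra.
Qed.

Lemma grid_floor_cell a w t (k : nat) : 0 < w ->
  a + INR k * w < t < a + INR (S k) * w -> grid_floor a w t = a + INR k * w.
Proof.
  intros Hw Ht. rewrite S_INR in Ht.
  assert (Hlo : INR k < (t - a) / w).
  { apply Rmult_lt_reg_r with w; [lra|].
    unfold Rdiv; rewrite Rmult_assoc, Rinv_l, Rmult_1_r; lra. }
  assert (Hhi : (t - a) / w < INR k + 1).
  { apply Rmult_lt_reg_r with w; [lra|].
    unfold Rdiv; rewrite Rmult_assoc, Rinv_l, Rmult_1_r; lra. }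
  unfold grid_floor.
  replace (Int_part ((t - a) / w)) with (Z.of_nat k).
  - rewrite <- INR_IZR_INZ; ring.
  - apply Int_part_spec. rewrite <- INR_IZR_INZ. lra.
Qed.

Lemma ex_RInt_grid_mult (phi f : R -> R) a b (K : nat) : a < b -> (0 < K)%nat ->
  ex_RInt f a b -> ex_RInt (fun t => phi (grid_floor a ((b - a) / INR K) t) * f t) a b.
Proof.
  intros Hab HK Hf. set (w := (b - a) / INR K).
  assert (HKpos : 0 < INR K) by (apply lt_0_INR; lia).
  assert (Hw : 0 < w) by (unfold w; apply Rdiv_lt_0_compat; lra).
  assert (Eb : a + INR K * w = b) by (unfold w; field; lra).
  assert (Hcells : forall k, (k <= K)%nat ->
            ex_RInt (fun t => phi (grid_floor a w t) * f t) a (a + INR k * w)).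
  { induction k as [|k IH]; intros Hk.
    - rewrite Rmult_0_l, Rplus_0_r. apply ex_RInt_point.
    - assert (Hk_le : a + INR k * w <= a + INR (S k) * w)
        by (rewrite S_INR, Rmult_plus_distr_r; lra).
      assert (Hk_ge : a <= a + INR k * w)
        by (generalize (Rmult_le_pos _ _ (pos_INR k) (Rlt_le _ _ Hw)); lra).
      assert (HSk : a + INR (S k) * w <= b).
      { rewrite <- Eb. apply Rplus_le_compat_l, Rmult_le_compat_r; [lra|].
        now apply le_INR. }
      apply ex_RInt_Chasles with (a + INR k * w); [apply IH; lia|].
      apply (ex_RInt_ext (fun t => scal (phi (a + INR k * w)) (f t))).
      + rewrite Rmin_left, Rmax_right by lra. intros t Ht.
        now rewrite (grid_floor_cell a w t k Hw Ht).
      + apply (ex_RInt_scal (V := R_NormedModule) f).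
        apply (ex_RInt_Chasles_2 (V := R_CompleteNormedModule) f a); [lra|].
        apply (ex_RInt_Chasles_1 (V := R_CompleteNormedModule) f a _ b); [lra|exact Hf]. }
  rewrite <- Eb. apply Hcells; lia.
Qed.

Lemma ex_RInt_mult_continuous (phi f : R -> R) a b : a < b -> ex_RInt f a b ->
  (forall t, a <= t <= b -> continuity_pt phi t) -> ex_RInt (fun t => phi t * f t) a b.
Proof.
  intros Hab Hf Hphi.
  destruct (ex_RInt_ub f a b Hf) as [B0 HB0].
  rewrite Rmin_left, Rmax_right in HB0 by lra.
  set (B := Rabs B0 + 1).
  assert (HB : 0 < B) by (unfold B; generalize (Rabs_pos B0); lra).
  assert (Hfb : forall t, a <= t <= b -> Rabs (f t) <= B).
  { intros t Ht. generalize (HB0 t Ht) (Rle_abs B0).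
    change (norm (f t)) with (Rabs (f t)). unfold B; lra. }
  apply (ex_RInt_uniform_limit _
           (fun n t => phi (grid_floor a ((b - a) / INR (S n)) t) * f t)); [lra| |].
  { intros n. apply ex_RInt_grid_mult; [exact Hab|lia|exact Hf]. }
  intros eps.
  destruct (Heine_cor1 Hab Hphi (mkposreal _ (Rdiv_lt_0_compat _ _ (cond_pos eps) HB)))
    as [delta [_ Hdelta]]; simpl in Hdelta.
  destruct (eventually_div_INR_lt (b - a) delta) as [N HN].
  exists N; intros n Hn t Ht.
  set (w := (b - a) / INR (S n)).
  assert (Hw : 0 < w) by (apply Rdiv_lt_0_compat; [lra|apply lt_0_INR; lia]).
  assert (Hwd : w < delta) by (apply HN; lia).
  destruct (grid_floor_bounds a w t Hw (proj1 Ht)) as [Hg1 Hg2].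
  assert (Hclose : Rabs (phi (grid_floor a w t) - phi t) < eps / B)
    by (apply Hdelta; [lra|lra|rewrite Rabs_left1; lra]).
  rewrite <- Rmult_minus_distr_r, Rabs_mult.
  apply Rle_lt_trans with (Rabs (phi (grid_floor a w t) - phi t) * B).
  - apply Rmult_le_compat_l; [apply Rabs_pos|apply Hfb, Ht].
  - replace (pos eps) with (eps / B * B) by (field; lra).
    apply Rmult_lt_compat_r; assumption.
Qed.

Lemma sin_sub_ge_1_sub_cos x y : - (PI / 2) <= y -> y <= x -> x <= PI / 2 ->
  1 - cos (x - y) <= sin x - sin y.
Proof.
  intros Hy Hyx Hx. set (d := x - y). set (c := (x + y) / 2).
  assert (E : sin x - sin y = 2 * cos c * sin (d / 2)).
  { replace (sin x - sin y) with (sin x + sin (- y)) by (rewrite sin_neg; ring).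
    rewrite form3. unfold c, d. do 3 f_equal; field. }
  assert (Ed : 1 - cos d = 2 * sin (d / 2) * sin (d / 2)).
  { replace d with (2 * (d / 2)) at 1 by field. rewrite cos_2a_sin. ring. }
  assert (Hs0 : 0 <= sin (d / 2)) by (apply sin_ge_0; unfold d; lra).
  (* |c| <= PI/2 - d/2, so cos c >= cos (PI/2 - d/2) = sin (d/2) *)
  assert (Hsc : sin (d / 2) <= cos c).
  { destruct (Rle_dec 0 c) as [Hc|Hc].
    - rewrite <- sin_shift. apply sin_incr_1; unfold c, d in *; lra.
    - rewrite <- cos_neg, <- sin_shift. apply sin_incr_1; unfold c, d in *; lra. }
  rewrite E, Ed. nra.
Qed.

Lemma asin_le u v : -1 <= u -> u <= v -> v <= 1 -> asin u <= asin v.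
Proof.
  intros Hu Huv Hv. apply Rnot_lt_le; intros Hlt.
  generalize (asin_bound u) (asin_bound v); intros Bu Bv.
  assert (H := sin_increasing_1 _ _ (proj1 Bv) (proj2 Bv) (proj1 Bu) (proj2 Bu) Hlt).
  rewrite !sin_asin in H by lra. lra.
Qed.

Lemma theta_grid_arg_bound M m : (0 < M)%nat -> (m <= M)%nat ->
  -1 <= 2 * INR m / INR M - 1 <= 1.
Proof.
  intros HM Hm. apply lt_0_INR in HM. apply le_INR in Hm.
  assert (0 <= INR m / INR M <= 1).
  { split; [apply Rdiv_le_0_compat; [apply pos_INR|lra]|].
    apply Rmult_le_reg_r with (INR M); [lra|].
    unfold Rdiv; rewrite Rmult_assoc, Rinv_l, Rmult_1_r; lra. }
  unfold Rdiv in *; lra.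
Qed.

Lemma sin_theta_grid M m : (0 < M)%nat -> (m <= M)%nat ->
  sin (theta_grid M m) = 2 * INR m / INR M - 1.
Proof. intros HM Hm. apply sin_asin, theta_grid_arg_bound; assumption. Qed.

Lemma theta_grid_0 M : theta_grid M 0 = - (PI / 2).
Proof.
  unfold theta_grid; simpl.
  replace (2 * 0 / INR M - 1) with (Ropp 1) by (unfold Rdiv; ring).
  rewrite asin_opp, asin_1; reflexivity.
Qed.

Lemma theta_grid_diag M : (0 < M)%nat -> theta_grid M M = PI / 2.
Proof.
  intros HM. apply lt_0_INR in HM. unfold theta_grid.
  replace (2 * INR M / INR M - 1) with 1 by (field; lra). apply asin_1.
Qed.

Lemma theta_grid_le_succ M m : (m < M)%nat -> theta_grid M m <= theta_grid M (S m).
Proof.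
  intros Hm. assert (HM : 0 < INR M) by (apply lt_0_INR; lia).
  apply asin_le;
    [apply (theta_grid_arg_bound M m); lia| |apply (theta_grid_arg_bound M (S m)); lia].
  rewrite S_INR. unfold Rdiv. apply Rplus_le_compat_r, Rmult_le_compat_r.
  - left; apply Rinv_0_lt_compat; lra.
  - lra.
Qed.

Lemma theta_grid_mesh (eps : posreal) : eventually (fun M =>
  forall m, (m < M)%nat -> Rabs (theta_grid M (S m) - theta_grid M m) <= eps).
Proof.
  set (e := Rmin eps PI).
  assert (He : 0 < e) by (apply Rmin_glb_lt; [apply cond_pos|apply PI_RGT_0]).
  assert (HePI : e <= PI) by apply Rmin_r.
  assert (Hce : 0 < 1 - cos e).
  { generalize (cos_decreasing_1 0 e (Rle_refl 0) (Rlt_le _ _ PI_RGT_0) (Rlt_le _ _ He) HePI He).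
    rewrite cos_0; lra. }
  destruct (eventually_div_INR_lt 2 (mkposreal _ Hce)) as [N HN]; simpl in HN.
  exists (S N); intros M HM m Hm.
  assert (Hmono := theta_grid_le_succ M m Hm).
  generalize (asin_bound (2 * INR m / INR M - 1)) (asin_bound (2 * INR (S m) / INR M - 1)).
  fold (theta_grid M m) (theta_grid M (S m)); intros Bm BSm.
  rewrite Rabs_pos_eq by lra. apply Rle_trans with e; [|apply Rmin_l].
  apply Rnot_lt_le; intros Hgap.
  (* a gap larger than e would force sin to grow by more than 1 - cos e > 2 / M *)
  assert (Hsin := sin_sub_ge_1_sub_cos (theta_grid M (S m)) (theta_grid M m)).
  rewrite !sin_theta_grid in Hsin by lia.
  replace (2 * INR (S m) / INR M - 1 - (2 * INR m / INR M - 1)) with (2 / INR M) in Hsin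
    by (rewrite S_INR; field; apply not_0_INR; lia).
  assert (Hcos : cos (theta_grid M (S m) - theta_grid M m) < cos e)
    by (apply cos_decreasing_1; lra).
  specialize (HN M ltac:(lia)). specialize (Hsin ltac:(lra) Hmono ltac:(lra)). lra.
Qed.

Lemma cexpi_0 : cexpi 0 = RtoC 1.
Proof. unfold cexpi, RtoC. now rewrite cos_0, sin_0. Qed.

Lemma cexpi_mult_conj x y : Cmult (cexpi x) (Cconj (cexpi y)) = cexpi (x - y).
Proof.
  unfold cexpi, Cmult, Cconj; simpl. rewrite cos_minus, sin_minus.
  f_equal; ring.
Qed.

Lemma Cconj_RtoC r : Cconj (RtoC r) = RtoC r.
Proof. unfold Cconj, RtoC; simpl. f_equal; ring. Qed.

Lemma kron_vec_lt M (x y : nat -> C) a : (a < M)%nat -> kron_vec M x y a = Cmult (x O) (y a).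
Proof. intros Ha. unfold kron_vec. now rewrite Nat.div_small, Nat.mod_small. Qed.

Lemma fcol_0 N q : fcol N q 0 = RtoC 1.
Proof.
  unfold fcol. replace (- 2 * PI * INR 0 * INR q / INR N) with 0
    by (simpl; unfold Rdiv; ring). apply cexpi_0.
Qed.

Definition ula_integrand (S : R -> R -> R) (Ts : R) (i j q : nat) (t : R) : C :=
  Cmult (cexpi (- PI * (INR i - INR j) * sin t)) (RtoC (S t (INR q * Ts))).

Lemma ex_RInt_ula_integrand (S : R -> R -> R) Ts i j q :
  ex_RInt (fun t => S t (INR q * Ts)) (- (PI / 2)) (PI / 2) ->
  ex_RInt (V := C_R_NormedModule) (ula_integrand S Ts i j q) (- (PI / 2)) (PI / 2).
Proof.
  intros Hf. assert (Hab : - (PI / 2) < PI / 2) by (generalize PI_RGT_0; lra).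
  set (phase t := - PI * (INR i - INR j) * sin t).
  apply (ex_RInt_fct_extend_pair (U := R_NormedModule) (V := R_NormedModule)).
  - apply (ex_RInt_ext (fun t => cos (phase t) * S t (INR q * Ts))).
    + intros t _. unfold phase, ula_integrand, cexpi, Cmult, RtoC; simpl. ring.
    + apply ex_RInt_mult_continuous; [exact Hab|exact Hf|intros; unfold phase; reg].
  - apply (ex_RInt_ext (fun t => sin (phase t) * S t (INR q * Ts))).
    + intros t _. unfold phase, ula_integrand, cexpi, Cmult, RtoC; simpl. ring.
    + apply ex_RInt_mult_continuous; [exact Hab|exact Hf|intros; unfold phase; reg].
Qed.

Lemma Rk_integrand_lt M Nc q (S : R -> R -> R) Ts i j t : (i < M)%nat -> (j < M)%nat ->
  Cmult (Cmult (kron_vec M (fcol Nc q) (arr_resp M t) i)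
               (Cconj (kron_vec M (fcol Nc q) (arr_resp M t) j)))
        (RtoC (S t (INR q * Ts)))
  = ula_integrand S Ts i j q t.
Proof.
  intros Hi Hj. rewrite !kron_vec_lt, fcol_0, !Cmult_1_l by assumption.
  unfold arr_resp, ula_integrand. rewrite cexpi_mult_conj.
  do 2 f_equal. ring.
Qed.

Lemma Rk_eq_sum_integral M Nc Ng Ts (S : R -> R -> R) i j : (i < M)%nat -> (j < M)%nat ->
  Rk M Nc Ng Ts S i j
  = sum_n (fun q => RInt (V := C_R_CompleteNormedModule) (ula_integrand S Ts i j q)
                         (- (PI / 2)) (PI / 2)) (Ng - 1).
Proof.
  intros Hi Hj. apply (@sum_n_ext C_AbelianMonoid); intros q.
  apply (RInt_ext (V := C_R_CompleteNormedModule)); intros t _.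
  now apply Rk_integrand_lt.
Qed.

(* The summand of [Rk_approx] at the column [c] with [c mod M = m] and [c / M = q]. *)
Definition approx_term M Nc Ts (S : R -> R -> R) i j m q : C :=
  Cmult (Cmult (Cmult (Fsub Nc (i / M)%nat q) (VM M (i mod M)%nat m))
               (RtoC (Omega M Nc Ts S m q)))
        (Cconj (Cmult (Fsub Nc (j / M)%nat q) (VM M (j mod M)%nat m))).

Lemma inv_sqrt_sq_mult x : 0 < x -> / sqrt x * / sqrt x * x = 1.
Proof. intros Hx. rewrite <- Rinv_mult, sqrt_sqrt by lra. field. lra. Qed.

Lemma approx_term_lt M Nc Ts (S : R -> R -> R) i j m q : (0 < Nc)%nat ->
  (i < M)%nat -> (j < M)%nat -> (m < M)%nat ->
  approx_term M Nc Ts S i j m q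
  = scal (theta_grid M (Nat.succ m) - theta_grid M m)
         (ula_integrand S Ts i j q (theta_grid M m)).
Proof.
  intros HNc Hi Hj Hm.
  assert (HM : 0 < INR M) by (apply lt_0_INR; lia).
  assert (HN : 0 < INR Nc) by (apply lt_0_INR; lia).
  unfold approx_term, Fsub, VM, Omega, ula_integrand.
  rewrite !Nat.div_small, !Nat.mod_small by assumption.
  replace (- 2 * PI * INR 0 * INR q / INR Nc) with 0 by (simpl; unfold Rdiv; ring).
  rewrite cexpi_0, !Cmult_conj, !Cconj_RtoC, scal_R_Cmult.
  set (a := / sqrt (INR Nc)). set (b := / sqrt (INR M)).
  set (dtheta := theta_grid M (Nat.succ m) - theta_grid M m).
  set (s := S (theta_grid M m) (INR q * Ts)).
  transitivity (Cmult (RtoC (a * a * INR Nc * (b * b * INR M) * dtheta * s))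
    (Cmult (cexpi (- 2 * PI * INR i * (INR m - INR M / 2) / INR M))
           (Cconj (cexpi (- 2 * PI * INR j * (INR m - INR M / 2) / INR M))))).
  { rewrite !RtoC_mult. ring. }
  unfold a, b; rewrite !inv_sqrt_sq_mult, cexpi_mult_conj by assumption.
  rewrite sin_theta_grid by lia.
  replace (- 2 * PI * INR i * (INR m - INR M / 2) / INR M
           - - 2 * PI * INR j * (INR m - INR M / 2) / INR M)
    with (- PI * (INR i - INR j) * (2 * INR m / INR M - 1)) by (field; lra).
  rewrite !RtoC_mult. ring.
Qed.

Lemma Rk_approx_eq_Riemann_sum M Nc Ng Ts (S : R -> R -> R) i j :
  (0 < Ng)%nat -> (0 < Nc)%nat -> (i < M)%nat -> (j < M)%nat ->
  Rk_approx M Nc Ng Ts S i j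
  = sum_n (fun q => sum_n (fun m =>
      scal (theta_grid M (Nat.succ m) - theta_grid M m)
           (ula_integrand S Ts i j q (theta_grid M m))) (M - 1)) (Ng - 1).
Proof.
  intros HNg HNc Hi Hj.
  transitivity (sum_n (fun q => sum_n (fun m => approx_term M Nc Ts S i j m q) (M - 1)) (Ng - 1)).
  { apply (sum_n_mod_div (G := C_AbelianMonoid) (approx_term M Nc Ts S i j)); lia. }
  apply (@sum_n_ext_loc C_AbelianMonoid); intros q _.
  apply (@sum_n_ext_loc C_AbelianMonoid); intros m Hm.
  apply approx_term_lt; lia.
Qed.

Lemma is_lim_Rk_approx Nc Ng Ts (S : R -> R -> R) i j :
  (0 < Ng)%nat -> (Ng <= Nc)%nat ->
  (forall q, (q < Ng)%nat ->
     ex_RInt (fun theta => S theta (INR q * Ts)) (- (PI / 2)) (PI / 2)) ->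
  filterlim (fun M => Rk_approx M Nc Ng Ts S i j) eventually
    (locally (sum_n (fun q => RInt (V := C_R_CompleteNormedModule)
                                (ula_integrand S Ts i j q) (- (PI / 2)) (PI / 2)) (Ng - 1))).
Proof.
  intros HNg HNgc Hint.
  assert (Hab : - (PI / 2) < PI / 2) by (generalize PI_RGT_0; lra).
  apply (filterlim_ext_loc (fun M => sum_n (fun q => sum_n (fun m =>
           scal (theta_grid M (Nat.succ m) - theta_grid M m)
                (ula_integrand S Ts i j q (theta_grid M m))) (M - 1)) (Ng - 1))).
  { exists (i + j + 1)%nat; intros M HM.
    symmetry; apply Rk_approx_eq_Riemann_sum; lia. }
  apply (filterlim_sum_n (V := C_R_NormedModule)); intros q Hq.
  apply (is_lim_left_Riemann_sum (V := C_R_NormedModule) _ _ _ _ theta_grid Hab).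
  - apply (RInt_correct (V := C_R_CompleteNormedModule)), ex_RInt_ula_integrand, Hint; lia.
  - exact theta_grid_0.
  - exact theta_grid_diag.
  - exact theta_grid_le_succ.
  - exact theta_grid_mesh.
Qed.

Theorem proposition1 (Nc Ng : nat) (Ts : R) (S : R -> R -> R) :
  (0 < Ng)%nat -> (Ng <= Nc)%nat -> 0 < Ts ->
  (forall theta q, - (PI / 2) <= theta <= PI / 2 -> (q < Ng)%nat ->
     0 <= S theta (INR q * Ts)) ->
  (exists B, forall theta q, - (PI / 2) <= theta <= PI / 2 -> (q < Ng)%nat ->
     Rabs (S theta (INR q * Ts)) <= B) ->
  (forall q, (q < Ng)%nat ->
     ex_RInt (fun theta => S theta (INR q * Ts)) (- (PI / 2)) (PI / 2)) ->
  forall i j : nat,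
    filterlim (fun M : nat => Cminus (Rk M Nc Ng Ts S i j) (Rk_approx M Nc Ng Ts S i j))
      eventually (locally (RtoC 0)).
Proof.
  intros HNg HNgc _ _ _ Hint i j.
  set (L := sum_n (fun q => RInt (V := C_R_CompleteNormedModule) (ula_integrand S Ts i j q)
                              (- (PI / 2)) (PI / 2)) (Ng - 1)).
  replace (RtoC 0) with (minus L L) by exact (minus_eq_zero L).
  apply (filterlim_ext_loc (fun M => minus L (Rk_approx M Nc Ng Ts S i j))).
  { exists (i + j + 1)%nat; intros M HM.
    now rewrite (Rk_eq_sum_integral M) by lia. }
  apply (filterlim_comp_2 (F := eventually) _ _ plus (filterlim_const L)
           (filterlim_comp _ _ _ _ _ _ _ _ (is_lim_Rk_approx _ _ _ _ i j HNg HNgc Hint)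
              (filterlim_opp L))).
  apply (filterlim_plus (V := C_R_NormedModule)).
Qed.
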